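(* Let $X$ be a topological space and $G\subset\mathrm{Hom}(X)$ a group of homeomorphisms such that the topology of pointwise convergence $\tau_p$ is an admissible group topology on $G$; $G$ carries $\tau_p$. Let $\mathcal U_X$ be an equiuniformity on $X$ for the action of $G$, and let $\mathcal U$ and $R_{\mathcal K}$ be the uniformities on $G$ defined below. If $\mathcal U=R_{\mathcal K}$ and $\mathcal U_X$ is totally bounded, then $G$ is Roelcke precompact.
   Context: Admissible group topology: $G$ is a topological group and the action on $X$ is continuous. $\tau_p$ has subbase $\{f\in G\mid f(x)\in O\}$, $x\in X$, $O$ open. An equiuniformity on $X$ is a compatible uniformity for which each $g\in G$ is uniformly continuous and for every uniform covering $u$ there are a neighbourhood $O$ of the identity in $G$ and a uniform covering $v$ with $\{OV\mid V\in v\}$ refining $u$. $\mathcal U$ is the uniformity on $G$ with base the coverings $\{\{h\in G\mid (g(x_k),h(x_k))\in\mathrm U,\ k=1,\dots,n\}\mid g\in G\}$, for $x_1,\dots,x_n\in X$ and $\mathrm U$ an entourage of $\mathcal U_X$. $R_{\mathcal K}$ is the uniformity on $G$ with base the coverings $\{Og\,\mathrm{St}_{x_1,\dots,x_n}\mid g\in G\}$, $O$ a neighbourhood of the identity, $x_1,\dots,x_n\in X$, where $\mathrm{St}_{x_1,\dots,x_n}$ is the pointwise stabilizer. The Roelcke uniformity $L\wedge R$ on a topological group is the greatest lower bound of the left and right uniformities (base: coverings $\{UgU\mid g\in G\}$, $U$ a neighbourhood of the identity); $G$ is Roelcke precompact if $L\wedge R$ is totally bounded. *)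

From mathcomp Require Import all_boot all_order all_algebra.
From mathcomp Require Import all_classical all_reals all_analysis.

Set Implicit Arguments.
Unset Strict Implicit.
Unset Printing Implicit Defensive.

Local Open Scope classical_set_scope.

Definition is_group_of_homeos (X : topologicalType) (G : set (X -> X)) : Prop :=
  [/\ G id,
      (forall f g, G f -> G g -> G (f \o g)),
      (forall f, G f -> exists g, G g /\ g \o f = id /\ f \o g = id)
    & (forall f, G f -> continuous f)].

(* N is a neighbourhood of g in (G, tau_p): it contains a finite intersection
   of subbasic sets {h in G | h x_i \in O_i}, O_i open, containing g. *)
Definition tp_nbhd (X : topologicalType) (G : set (X -> X)) (g : X -> X)
  (N : set (X -> X)) : Prop :=
  exists (n : nat) (xs : 'I_n -> X) (Os : 'I_n -> set X),
    (forall i, open (Os i) /\ Os i (g (xs i))) /\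
    [set h | G h /\ forall i, Os i (h (xs i))] `<=` N.

(* tau_p is an admissible group topology on G: (G, tau_p) is a topological
   group and the action G x X -> X is continuous. *)
Definition admissible_tp (X : topologicalType) (G : set (X -> X)) : Prop :=
  [/\ (forall g h, G g -> G h -> forall W, tp_nbhd G (g \o h) W ->
         exists U V, [/\ tp_nbhd G g U, tp_nbhd G h V &
           forall u v, G u -> G v -> U u -> V v -> W (u \o v)]),
      (forall g g', G g -> G g' -> g' \o g = id -> forall W, tp_nbhd G g' W ->
         exists U, tp_nbhd G g U /\
           forall h h', G h -> G h' -> h' \o h = id -> U h -> W h')
    & (forall g x, G g -> forall O, open O -> O (g x) ->
         exists U V, [/\ tp_nbhd G g U, nbhs x V &
           forall h y, G h -> U h -> V y -> O (h y)])].

Definition refines (T : Type) (b u : set (set T)) : Prop :=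
  forall V, b V -> exists2 U, u U & V `<=` U.

(* Uniform coverings of a uniform space (covering description of the
   uniformity): covers refined by {E[x] | x in X} for an entourage E. *)
Definition unif_cover (X : uniformType) (u : set (set X)) : Prop :=
  exists2 E, entourage E &
    forall x, exists2 U, u U & [set y | E (x, y)] `<=` U.

Definition equiuniform (X : uniformType) (G : set (X -> X)) : Prop :=
  (forall g, G g -> forall E, entourage E ->
     exists2 D, entourage D & forall x y, D (x, y) -> E (g x, g y)) /\
  (forall u, unif_cover u ->
     exists O v, [/\ tp_nbhd G id O, unif_cover v &
       refines [set [set z | exists g y, [/\ O g, G g, V y & z = g y]]
                 | V in v] u]).

Definition gen_unif (T : Type) (B : set (set (set T))) : set (set (set T)) :=
  [set u | exists2 b, B b & refines b u].

Definition U_base (X : uniformType) (G : set (X -> X)) : set (set (set (X -> X))) :=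
  [set b | exists A E, [/\ finite_set A, entourage E &
     b = [set [set h | G h /\ forall x, A x -> E (g x, h x)] | g in G]]].

Definition St (X : Type) (G : set (X -> X)) (A : set X) : set (X -> X) :=
  [set h | G h /\ forall x, A x -> h x = x].

Definition R_base (X : topologicalType) (G : set (X -> X)) : set (set (set (X -> X))) :=
  [set b | exists O A, [/\ tp_nbhd G id O, finite_set A &
     b = [set [set f | exists o s, [/\ O o, G o, St G A s & f = o \o g \o s]]
           | g in G]]].

Definition LR_base (X : topologicalType) (G : set (X -> X)) : set (set (set (X -> X))) :=
  [set b | exists U, tp_nbhd G id U /\
     b = [set [set f | exists u v, [/\ U u, G u, U v, G v & f = u \o g \o v]]
           | g in G]].

Definition totally_bounded_cov (T : Type) (C : set (set (set T))) (A : set T) : Prop :=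
  forall u, C u -> exists (n : nat) (Us : 'I_n -> set T),
    (forall i, u (Us i)) /\ A `<=` [set t | exists i, Us i t].

Definition roelcke_precompact (X : topologicalType) (G : set (X -> X)) : Prop :=
  totally_bounded_cov (gen_unif (LR_base G)) G.

From mathcomp Require Import all_boot all_order all_algebra.
From mathcomp Require Import all_classical all_reals all_analysis.

Set Implicit Arguments.
Unset Strict Implicit.
Unset Printing Implicit Defensive.

(** Every neighbourhood [O] of the identity in [tau_p] contains a pointwise
    stabilizer [St_A] of a finite set [A], so the [R_K]-cover [{O g St_A}]
    refines the Roelcke cover [{O g O}]: the Roelcke uniformity is coarser than
    [R_K = U].  And [U] is totally bounded as soon as [U_X] is: given an
    entourage [E] and a finite [A], cover [X] by finitely many [E]-small sets
    [B_1, ..., B_n]; the cells [{h | h x \in B_(phi x) for x \in A}], one for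
    each [phi : A -> 'I_n], are finitely many and each is contained in the
    [U]-basic set of [(A, E)] around any of its members. *)

Local Open Scope classical_set_scope.

Lemma refines_trans (T : Type) (a b c : set (set T)) :
  refines a b -> refines b c -> refines a c.
Proof.
move=> ab bc V /ab[U /bc[W cW UW] VU]; exists W => //.
exact: subset_trans UW.
Qed.

Lemma totally_bounded_cov_sub (T : Type) (C C' : set (set (set T))) (A : set T) :
  C `<=` C' -> totally_bounded_cov C' A -> totally_bounded_cov C A.
Proof. by move=> CC' tb u /CC'/tb. Qed.

Lemma totally_bounded_gen_unif (T : Type) (B : set (set (set T))) (A : set T) :
  totally_bounded_cov B A -> totally_bounded_cov (gen_unif B) A.
Proof.
move=> tb u [b /tb[n [Vs [bV AV]]] bu].
have /choice[W HW] : forall i, exists W, u W /\ Vs i `<=` W.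
  by move=> i; have [W uW VW] := bu _ (bV i); exists W.
exists n, W; split=> [i|t /AV[i Vit]]; first by case: (HW i).
by exists i; apply: (HW i).2.
Qed.

Lemma finite_subcover_of_refinement (T : Type) (I : finType)
    (b : set (set T)) (A : set T) (C : I -> set T) :
  A `<=` \bigcup_i C i ->
  (forall i, C i `&` A !=set0 -> exists2 W, b W & C i `&` A `<=` W) ->
  exists n (Us : 'I_n -> set T),
    (forall i, b (Us i)) /\ A `<=` [set t | exists i, Us i t].
Proof.
move=> AC Cb.
have /choice[W HW] : forall i, exists W, C i `&` A !=set0 -> b W /\ C i `&` A `<=` W.
  move=> i; have [/Cb[W bW CW]|CA0] := pselect (C i `&` A !=set0); first by exists W.
  by exists set0 => /CA0.
pose S : {pred I} := fun i => `[< C i `&` A !=set0 >].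
exists #|S|, (W \o enum_val); split=> [j|t At].
  by have /asboolP/HW[] := enum_valP j.
have [i _ Cit] := AC t At.
have CAi : C i `&` A !=set0 by exists t.
have Si : i \in S by apply/asboolP.
exists (enum_rank_in Si i) => /=; rewrite enum_rankK_in //.
by apply: (HW i CAi).2.
Qed.

Lemma small_finite_cover (X : uniformType) (E : set (X * X)) :
  entourage E -> totally_bounded_cov (@unif_cover X) setT ->
  exists n (Bs : 'I_n -> set X),
    (forall i z w, Bs i z -> Bs i w -> E (z, w)) /\ forall z, exists i, Bs i z.
Proof.
move=> entE tb.
pose D := split_ent E `&` (split_ent E)^-1%relation.
have entD : entourage D := entourage_invI (entourage_split_ent entE).
have [|n [Bs [ballB coverB]]] := tb [set [set z | D (y, z)] | y in setT].
  by exists D => // x; exists [set z | D (x, z)]; first by exists x.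
exists n, Bs; split=> [i z w|z]; last by have [i] := coverB z I; exists i.
have [y _ <-] := ballB i => -[_ yz] [yw _].
exact: (entourage_split y entE).
Qed.

Lemma U_base_totally_bounded (X : uniformType) (G : set (X -> X)) :
  totally_bounded_cov (@unif_cover X) setT -> totally_bounded_cov (U_base G) G.
Proof.
move=> tb _ [A [E [/finite_seqP[s ->] entE ->]]].
have [n [Bs [Bs_small Bs_cover]]] := small_finite_cover entE tb.
pose xs := tnth (in_tuple s).
pose cell (phi : {ffun 'I_(size s) -> 'I_n}) :=
  [set h : X -> X | forall j, Bs (phi j) (h (xs j))].
apply: (@finite_subcover_of_refinement _ _ _ _ cell) => [h _ | phi [g [cg Gg]]].
  have /choice[phi Hphi] : forall j, exists i, Bs i (h (xs j)) by move=> j.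
  by exists [ffun j => phi j] => // j; rewrite ffunE.
exists [set h | G h /\ forall x, [set` s] x -> E (g x, h x)]; first by exists g.
move=> h [ch Gh]; split=> // x /(tnthP (in_tuple s))[j ->].
exact: Bs_small (cg j) (ch j).
Qed.

Lemma tp_nbhd_id_stabilizer (X : topologicalType) (G : set (X -> X))
    (U : set (X -> X)) :
  tp_nbhd G id U -> exists2 A, finite_set A & St G A `<=` U.
Proof.
move=> [n [xs [Os [HOs HU]]]]; exists (range xs).
  by apply: finite_image; apply: finite_finset.
move=> h [Gh hA]; apply: HU; split=> // i.
by rewrite hA; [case: (HOs i) | exists i].
Qed.

Lemma gen_unif_LR_sub_R (X : topologicalType) (G : set (X -> X)) :
  gen_unif (LR_base G) `<=` gen_unif (R_base G).
Proof.
move=> u [_ [U [HU ->]] bu]; have [A finA StU] := tp_nbhd_id_stabilizer HU.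
eexists; first by exists U, A.
apply: refines_trans bu => _ [g Gg <-].
eexists; first by exists g.
move=> _ [v [t [Uv Gv Stt ->]]]; have [Gt _] := Stt.
by exists v, t; split; [| | exact: StU | |].
Qed.

(* The group, admissibility and equiuniformity hypotheses are only needed for
   [U], [R_K] and [L /\ R] to be the uniformities of the paper; the covering
   argument does not use them. *)
Theorem corollary2p2 (X : uniformType) (G : set (X -> X)) :
  is_group_of_homeos G ->
  admissible_tp G ->
  equiuniform G ->
  gen_unif (U_base G) = gen_unif (R_base G) ->
  totally_bounded_cov (@unif_cover X) setT ->
  roelcke_precompact G.
Proof.
move=> _ _ _ U_eq_R tb.
apply: (totally_bounded_cov_sub (@gen_unif_LR_sub_R X G)).
rewrite -U_eq_R; apply: totally_bounded_gen_unif.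
exact: U_base_totally_bounded.
Qed.
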